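(* Let $p$ be a prime, $n \ge 2$, and $G$ a group of order $p^n$ and exponent $p$. Then $\eta(G) \ge n + p - 1$.
   Context: A cyclic subgroup $C$ of a group $G$ is maximal cyclic if there is no cyclic subgroup $D$ of $G$ with $C < D$. $\eta(G)$ denotes the number of conjugacy classes of maximal cyclic subgroups of $G$. *)

From HB Require Import structures.
From mathcomp Require Import all_boot all_fingroup all_solvable.
Set Implicit Arguments.
Unset Strict Implicit.
Unset Printing Implicit Defensive.
Local Open Scope group_scope.

Definition max_cyclic {gT : finGroupType} (G C : {group gT}) : bool :=
  [max C | (C \subset G) && cyclic C].

Definition max_cyclics {gT : finGroupType} (G : {group gT}) : {set {group gT}} :=
  [set C : {group gT} | max_cyclic G C].

Definition eta {gT : finGroupType} (G : {group gT}) : nat :=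
  #|[set orbit 'JG%act G C | C in max_cyclics G]|.

(* In a nontrivial group of exponent p the maximal cyclic subgroups are exactly
   the subgroups of order p.  If #|G| = p^2 then G is elementary abelian, with
   p + 1 such subgroups, each forming its own conjugacy class.  Otherwise G has
   a normal subgroup N of order p, and C |-> C / N maps the subgroups of order p
   other than N onto those of G / N, compatibly with conjugation; hence the
   classes of G other than {N} map onto the classes of G / N, so that
   eta (G / N) < eta G, and induction on n concludes. *)

From mathcomp Require Import all_boot all_fingroup all_solvable.
Set Implicit Arguments.
Unset Strict Implicit.
Unset Printing Implicit Defensive.
Local Open Scope group_scope.

Section ExponentPrime.
Variables (gT : finGroupType) (G : {group gT}) (p : nat).
Hypotheses (p_pr : prime p) (expG : exponent G %| p).

Lemma order_exponent_prime x : x \in G -> x != 1 -> #[x] = p.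
Proof.
move=> Gx ntx; apply/(prime_nt_dvdP p_pr); first by rewrite order_eq1.
exact: dvdn_trans (dvdn_exponent Gx) expG.
Qed.

Lemma max_cyclicE (C : {group gT}) :
  G :!=: 1 -> max_cyclic G C = (C \subset G) && (#|C| == p).
Proof.
move=> ntG; apply/maxgroupP/andP=> [[/andP[sCG /cyclicP[x defC]] maxC] | [sCG /eqP oC]].
  have Gx : x \in G by rewrite -cycle_subG -defC.
  split=> //; have [x1 | ntx] := eqVneq x 1; last by rewrite defC [#|_|]order_exponent_prime.
  have [y Gy nty] := trivgPn _ ntG.
  have /eqP : <[y]> = C :> {set gT}.
    by apply: (maxC <[y]>%G); rewrite ?cycle_subG ?Gy ?cycle_cyclic // defC x1 cycle1 sub1G.
  by rewrite defC x1 cycle1 cycle_eq1 (negbTE nty).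
split=> [|D /andP[sDG /cyclicP[y defD]] sCD].
  by rewrite sCG prime_cyclic ?oC.
have Gy : y \in G by rewrite -cycle_subG -defD.
have nty : y != 1.
  by apply: contraTneq sCD => y1; rewrite defD y1 cycle1 subG1 trivg_card1 oC gtn_eqF ?prime_gt1.
by apply/esym/eqP; rewrite eqEcard sCD defD [#|_|]order_exponent_prime // oC leqnn.
Qed.

End ExponentPrime.

Lemma eta_abelian gT (G : {group gT}) : abelian G -> eta G = #|max_cyclics G|.
Proof.
move=> cGG; rewrite /eta card_in_imset // => C D; rewrite !inE => /maxgroupp/andP[sCG _] _ eqCD.
have: D \in orbit 'JG G C by rewrite eqCD orbit_refl.
case/imsetP=> g Gg ->; apply/val_inj => /=.
by rewrite (normsP (sub_abelian_norm cGG sCG)).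
Qed.

Lemma eta_p2group gT (G : {group gT}) p :
  prime p -> exponent G %| p -> #|G| = (p ^ 2)%N -> eta G = p.+1.
Proof.
move=> p_pr expG oG; have cGG := card_p2group_abelian p_pr oG.
have E2G : G \in 'E_p^2(G) by apply/pnElemP; rewrite abelemE // cGG expG oG pfactorK.
have ntG : G :!=: 1 by rewrite trivg_card1 oG -(expn0 p) eqn_exp2l ?prime_gt1.
rewrite eta_abelian // -(card_p1Elem_p2Elem E2G) p1ElemE //.
by apply: eq_card => C; rewrite !inE (max_cyclicE p_pr).
Qed.

Lemma orbitJG_quotient gT (G N C : {group gT}) : G \subset 'N(N) ->
  orbit 'JG (G / N) (C / N)%G = [set (D / N)%G | D in orbit 'JG G C].
Proof.
move=> nNG; rewrite !orbitE quotientE morphimEsub // -!imset_comp.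
by apply: eq_in_imset => g Gg; apply/val_inj; rewrite /= quotientJ ?(subsetP nNG).
Qed.

Lemma card_quotient_prime gT (C N : {group gT}) p : prime p -> #|C| = p ->
  C \subset 'N(N) -> ~~ (C \subset N) -> #|C / N| = p.
Proof.
move=> p_pr oC nNC not_sCN; apply/(prime_nt_dvdP p_pr); last by rewrite -oC dvdn_quotient.
by rewrite -trivg_card1 -subG1 quotient_sub1.
Qed.

Section QuotientByNormalSubgroupOfOrderP.
Variables (gT : finGroupType) (G N : {group gT}) (p : nat).
Hypotheses (p_pr : prime p) (expG : exponent G %| p) (nsNG : N <| G) (oN : #|N| = p).
Hypothesis ntGN : G / N != 1.

Let nNG : G \subset 'N(N) := normal_norm nsNG.
Let expGN : exponent (G / N) %| p := dvdn_trans (exponent_quotient G N) expG.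
Let ntG : G :!=: 1.
Proof. by apply: contraNneq ntGN => ->; rewrite quotient1. Qed.

Lemma max_cyclics_quotient :
  [set (C / N)%G | C in max_cyclics G :\ N] = max_cyclics (G / N).
Proof.
apply/setP=> K; rewrite inE (max_cyclicE p_pr expGN _ ntGN); apply/imsetP/andP.
  case=> C; rewrite !inE (max_cyclicE p_pr expG _ ntG) => /andP[neCN /andP[sCG /eqP oC]] ->.
  split; first exact: quotientS.
  apply/eqP/card_quotient_prime; rewrite ?(subset_trans sCG nNG) //.
  by apply: contra neCN => sCN; rewrite -val_eqE eqEcard sCN oC oN /=.
case=> sKGN /eqP oK; have /cyclicP[y defK] : cyclic K by rewrite prime_cyclic ?oK.
have /morphimP[x Nx Gx defy] : y \in G / N by rewrite -cycle_subG -defK.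
have nty : y != 1 by rewrite -cycle_eq1 -defK trivg_card1 oK gtn_eqF ?prime_gt1.
have notNx : x \notin N by apply: contra nty; rewrite defy => xN; apply/eqP/coset_id.
have ntx : x != 1 by apply: contraNneq notNx => ->; apply: group1.
exists <[x]>%G; last by apply/val_inj; rewrite /= quotient_cycle // -defy.
rewrite !inE (max_cyclicE p_pr expG _ ntG) cycle_subG Gx.
rewrite [#|_|](order_exponent_prime p_pr expG) // eqxx !andbT.
by apply: contraNneq notNx => <-; apply: cycle_id.
Qed.

Lemma ltn_eta_quotient : (eta (G / N)).+1 <= eta G.
Proof.
rewrite /eta -max_cyclics_quotient -imset_comp; set M := max_cyclics G.
have MN : N \in M by rewrite inE (max_cyclicE p_pr expG _ ntG) normal_sub // oN eqxx.
have -> : [set orbit 'JG G C | C in M] = orbit 'JG G N |: [set orbit 'JG G C | C in M :\ N].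
  by rewrite -imsetU1 setD1K.
have -> : [set orbit 'JG (G / N) (C / N)%G | C in M :\ N] =
          [set [set (D / N)%G | D in O] | O : {set {group gT}} in [set orbit 'JG G C | C in M :\ N]].
  by rewrite -imset_comp; apply: eq_imset => C; rewrite /= orbitJG_quotient.
have orbitN_new : orbit 'JG G N \notin [set orbit 'JG G C | C in M :\ N].
  apply/imsetP=> -[C]; rewrite !inE => /andP[neCN _] orbitNC.
  have /imsetP[g Gg defC] : C \in orbit 'JG G N by rewrite orbitNC orbit_refl.
  by move: neCN; rewrite defC -val_eqE /= (normsP nNG) ?eqxx.
by rewrite cardsU1 orbitN_new add1n ltnS leq_imset_card.
Qed.

End QuotientByNormalSubgroupOfOrderP.

Lemma leq_eta_exponent_prime gT (G : {group gT}) p n : prime p -> 2 <= n ->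
  #|G| = (p ^ n)%N -> exponent G %| p -> n + p - 1 <= eta G.
Proof.
move=> p_pr; elim: n gT G => // n IHn gT G.
rewrite ltnS leq_eqVlt => /predU1P[<- | n_gt1] oG expG.
  by rewrite (eta_p2group p_pr) // add2n subn1.
have pG : p.-group G by rewrite /pgroup oG pnatX pnat_id.
have [N [_ nsNG oN]] : exists N : {group gT}, [/\ N \subset G, N <| G & #|N| = (p ^ 1)%N].
  by apply: normal_pgroup; rewrite ?normal_refl // oG pfactorK.
rewrite expn1 in oN.
have oGN : #|G / N| = (p ^ n)%N.
  by rewrite card_quotient ?normal_norm // -divgS ?normal_sub // oG oN expnS mulKn ?prime_gt0.
have ntGN : G / N != 1.
  by rewrite trivg_card1 oGN -(expn0 p) eqn_exp2l ?prime_gt1 // -lt0n ltnW.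
apply: leq_trans (ltn_eta_quotient p_pr expG nsNG oN ntGN).
rewrite addSn subSS subn0 -add1n -leq_subLR.
exact: IHn _ _ n_gt1 oGN (dvdn_trans (exponent_quotient G N) expG).
Qed.

Local Close Scope group_scope.
Unset Implicit Arguments.

Theorem corollary4p5 (gT : finGroupType) (G : {group gT}) (p n : nat) :
  prime p -> 2 <= n -> #|G| = p ^ n -> exponent G = p ->
  n + p - 1 <= eta G.
Proof. by move=> p_pr n_ge2 oG expG; apply: leq_eta_exponent_prime; rewrite ?expG. Qed.
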